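(* Let $\mathcal{T}$ be a tree with costs $c:V(\mathcal{T})\to\mathbb{R}_{>0}$, let $a\ge 0$ be such that some vertex $v$ has $c(v)\le a$, and let $k=k(\mathcal{T},c)$. Construct $\mathcal{X},\mathcal{Y},\mathcal{Z}$ and $\mathcal{T}_{\mathcal{Z}}$ as described (for any choices made in the construction). Then $|V(\mathcal{T}_{\mathcal{Z}})|\le 4k-3$.
   Context: For $t\ge 0$, a heavy module with respect to $t$ is a set $H\subseteq V(\mathcal{T})$ with $\mathcal{T}[H]$ connected, $c(v)>t$ for all $v\in H$, and maximal with these properties; $k(\mathcal{T},c,t)$ is the number of such modules and $k(\mathcal{T},c)=\max_{t\ge0}k(\mathcal{T},c,t)$. For $S\subseteq V(\mathcal{T})$, $\mathcal{T}\langle S\rangle$ is the minimal subtree containing $S$; for vertices $u,v$, $\mathcal{P}_{\mathcal{T}}(u,v)$ is the set of vertices on the $u$–$v$ path excluding $u,v$. Construction: $\mathcal{X}$ contains one arbitrarily chosen vertex from each heavy module with respect to $a$. $\mathcal{Y}=\mathcal{X}\cup\{v\in V(\mathcal{T}\langle\mathcal{X}\rangle):\deg_{\mathcal{T}\langle\mathcal{X}\rangle}(v)\ge 3\}$. $\mathcal{Z}$ consists of $\mathcal{Y}$ together with, for every pair $u,v\in\mathcal{Y}$ with $\mathcal{P}_{\mathcal{T}}(u,v)\ne\emptyset$ and $\mathcal{P}_{\mathcal{T}}(u,v)\cap\mathcal{Y}=\emptyset$, a vertex of $\mathcal{P}_{\mathcal{T}}(u,v)$ of minimum cost. The auxiliary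 tree is $\mathcal{T}_{\mathcal{Z}}$ with vertex set $\mathcal{Z}$ and edges $uv$ for all $u,v\in\mathcal{Z}$ with $\mathcal{P}_{\mathcal{T}}(u,v)\cap\mathcal{Z}=\emptyset$. *)

From mathcomp Require Import all_boot all_order all_algebra.
Set Implicit Arguments. Unset Strict Implicit. Unset Printing Implicit Defensive.
Import Order.TTheory GRing.Theory Num.Theory.
Local Open Scope ring_scope.

Section TreeDefs.
Variable V : finType.
Variable e : rel V.

(* simple path u = x0, x1, ..., xn = v, given as u :: p *)
Definition upath (u v : V) (p : seq V) : bool :=
  [&& path e u p, last u p == v & uniq (u :: p)].

Definition is_tree : Prop :=
  [/\ symmetric e, irreflexive e, (forall x y, connect e x y)
    & (forall u v p q, upath u v p -> upath u v q -> p = q)].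

Definition restr (H : {set V}) : rel V :=
  [rel x y | [&& e x y, x \in H & y \in H]].

Definition connectedb (H : {set V}) : bool :=
  [forall x in H, forall y in H, connect (restr H) x y].

Variable R : realFieldType.
Variable c : V -> R.

Definition heavy_setb (t : R) (H : {set V}) : bool :=
  [&& H != set0, connectedb H & [forall v in H, t < c v]].

Definition heavy_module (t : R) (H : {set V}) : bool :=
  heavy_setb t H &&
  [forall H' : {set V}, (H \subset H') && heavy_setb t H' ==> (H' == H)].

Definition heavy_modules (t : R) : {set {set V}} := [set H | heavy_module t H].

Definition kt (t : R) : nat := #|heavy_modules t|.

Definition min_subtree (S : {set V}) : {set V} :=
  \bigcap_(H : {set V} | (S \subset H) && connectedb H) H.

Definition deg_in (H : {set V}) (v : V) : nat := #|[set w in H | e v w]|.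

Definition Yset (X : {set V}) : {set V} :=
  X :|: [set v in min_subtree X | (3 <= deg_in (min_subtree X) v)%N].

Definition inner (u v w : V) : Prop :=
  w <> u /\ w <> v /\ exists p, upath u v p /\ w \in p.

Definition good_pair (Y : {set V}) (u v : V) : Prop :=
  [/\ u \in Y, v \in Y, (exists w, inner u v w)
    & (forall w, inner u v w -> w \notin Y)].

End TreeDefs.

From mathcomp Require Import all_boot all_order all_algebra zify.
Set Implicit Arguments. Unset Strict Implicit. Unset Printing Implicit Defensive.

(* Let S be the vertex set of T<X> and B its set of vertices of degree at least 3, so that
   Y = X ∪ B.  Every leaf of T<X> lies in X, and an induction over the branches of T shows
   that a branch meeting S but missing some vertex of X contains fewer vertices of B than of
   X; hence |B| < |X| and |Y| < 2|X|.
   Fix r ∈ X.  A vertex z of Z \ Y is inner to the path joining a good pair {y, u}, and after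
   swapping y and u it is also inner to the path from y to r.  The two paths from y agree up
   to z; where they part, T<X> would have a vertex of degree 3, which is impossible inside the
   y–u path, so u is the first vertex of Y on the path from y to r.  Thus z is determined by
   y ∈ Y \ {r}, and |Z| < 2|Y| ≤ 4|X| - 2.  Finally X has one vertex in each heavy module
   with respect to a, so |X| ≤ k(T, c, a) ≤ k. *)

Lemma card_bigcup_le (I T : finType) (P : {pred I}) (F : I -> {set T}) :
  #|\bigcup_(i in P) F i| <= \sum_(i in P) #|F i|.
Proof.
elim/big_rec2: _ => [|i n U _ IH]; first by rewrite cards0.
by apply: leq_trans (leq_card_setU _ _) _; rewrite leq_add2l.
Qed.

Lemma card_bigcup_disjoint (I T : finType) (P : {pred I}) (F : I -> {set T}) :
  {in P &, forall i j, i != j -> [disjoint F i & F j]} ->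
  #|\bigcup_(i in P) F i| = \sum_(i in P) #|F i|.
Proof.
move=> disF; rewrite -!big_enum.
have : uniq (enum P) by exact: enum_uniq.
have : {subset enum P <= P} by move=> i; rewrite mem_enum.
elim: (enum P) => [|i s IH] /= sP; first by rewrite !big_nil cards0.
case/andP=> i_s s_uniq; rewrite !big_cons -IH //; last first.
  by move=> j js; rewrite sP ?inE ?js ?orbT.
apply/eqP; rewrite (leq_card_setU _ _).2 bigcup_seq; apply: bigcup_disjoint => j js.
by apply: disF; rewrite ?sP ?inE ?eqxx ?js ?orbT //; apply: contraNneq i_s => ->.
Qed.

Lemma leq_card_transversal (T : finType) (X : {set T}) (P : {set {set T}}) :
  (forall x, x \in X -> exists H, H \in P /\ x \in H) ->
  (forall H, H \in P -> #|X :&: H| <= 1) -> #|X| <= #|P|.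
Proof.
move=> coverX meet1.
have sub : X \subset \bigcup_(H in P) (X :&: H).
  apply/subsetP => x xX; have [H [HP xH]] := coverX x xX.
  by apply/bigcupP; exists H; rewrite ?inE ?xX.
apply: leq_trans (subset_leq_card sub) _; apply: leq_trans (card_bigcup_le _ _) _.
by rewrite -sum1_card; apply: leq_sum.
Qed.

Lemma mem_split (T : eqType) (s : seq T) x : x \in s -> exists s1 s2, s = s1 ++ x :: s2.
Proof. by case/splitPr => s1 s2; exists s1, s2. Qed.

Lemma common_prefix (T : eqType) (s t : seq T) : exists c s' t',
  [/\ s = c ++ s', t = c ++ t' &
      forall b s2 b' t2, s' = b :: s2 -> t' = b' :: t2 -> b != b'].
Proof.
elim: s t => [|b s IH] [|b' t]; first by exists [::], [::], [::].
- by exists [::], [::], (b' :: t).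
- by exists [::], (b :: s), [::].
have [<-|bb'] := eqVneq b b'.
  by have [c [s' [t' [-> -> div]]]] := IH t; exists (b :: c), s', t'.
by exists [::], (b :: s), (b' :: t); split=> // ? ? ? ? [<- _] [<- _].
Qed.

Lemma connect_upath (T : finType) (r : rel T) x y : connect r x y ->
  exists p, [/\ path r x p, last x p = y & uniq (x :: p)].
Proof. by case/connectP => p /shortenP[q pq uq _] ->; exists q. Qed.

Lemma path_crossing (T : eqType) (r : rel T) (A : {pred T}) x p :
  path r x p -> x \in A -> last x p \notin A ->
  exists a b, [/\ a \in A, b \notin A & r a b].
Proof.
elim: p x => [|y p IH] x /=; first by move=> _ ->.
case/andP=> rxy pp xA; case: (boolP (y \in A)) => yA; first exact: IH.
by move=> _; exists x, y.
Qed.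

Section Tree.
Variables (V : finType) (e : rel V).
Hypothesis e_sym : symmetric e.
Hypothesis e_irr : irreflexive e.
Hypothesis e_connect : forall x y, connect e x y.
Hypothesis upath_uniq : forall u v p q, upath e u v p -> upath e u v q -> p = q.

Lemma edge_neq x y : e x y -> x != y.
Proof. by apply: contraTneq => ->; rewrite e_irr. Qed.

Lemma restr_sub H : subrel (restr e H) e.
Proof. by move=> x y /and3P[]. Qed.

Lemma restr_sym H : symmetric (restr e H).
Proof. by move=> x y; rewrite /restr /= e_sym (andbC (x \in H)). Qed.

Lemma path_restr_all H x p : path (restr e H) x p -> all [in H] p.
Proof. by elim: p x => //= y p IH x /andP[/and3P[_ _ ->] /IH]. Qed.

Lemma connect_restr_mem H x y : connect (restr e H) x y -> x != y -> y \in H.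
Proof.
case/connectP => -[|z p] pp ->; first by rewrite eqxx.
by move=> _; apply: (allP (path_restr_all pp)); apply: (mem_last z p).
Qed.

Lemma upath_exists x y : exists p, upath e x y p.
Proof.
have [p [pp lp up]] := connect_upath (e_connect x y).
by exists p; rewrite /upath pp lp eqxx up.
Qed.

Lemma upath_of_restr H x p : path (restr e H) x p -> uniq (x :: p) ->
  upath e x (last x p) p.
Proof. by move=> pp up; rewrite /upath eqxx up (sub_path (@restr_sub H) pp). Qed.

Lemma upath_nil x p : upath e x x p -> p = [::].
Proof.
case/and3P => _ /eqP lp /andP[xnp _]; case: p lp xnp => // y p /= lp.
by rewrite -lp mem_last.
Qed.

Lemma inner_irr x w : ~ inner e x x w.
Proof. by case=> _ [_ [p [/upath_nil -> ]]]. Qed.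

Lemma connectedbP (H : {set V}) :
  reflect {in H &, forall x y, connect (restr e H) x y} (connectedb e H).
Proof.
apply: (iffP forall_inP) => [h x y xH yH | h x xH]; first exact: (forall_inP (h x xH)).
by apply/forall_inP => y; apply: h.
Qed.

Definition branch (v w : V) : {set V} := [set y | connect (restr e (~: [set v])) w y].

Lemma branch_root v w : w \in branch v w.
Proof. by rewrite inE connect0. Qed.

Lemma branch_notin v w : e v w -> v \notin branch v w.
Proof.
move=> evw; rewrite inE; apply/negP => /connect_restr_mem.
by rewrite eq_sym (edge_neq evw) !inE eqxx => /(_ isT).
Qed.

Lemma branch_nbr v w1 w2 : e v w1 -> e v w2 -> w2 \in branch v w1 -> w1 = w2.
Proof.
move=> e1 e2; rewrite inE => /connect_upath[p [pp lp up]].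
have vNp : v \notin p by apply/negP => /(allP (path_restr_all pp)); rewrite !inE eqxx.
have u1 : upath e v w2 (w1 :: p).
  rewrite /upath /= e1 (sub_path (@restr_sub _) pp) lp eqxx /=.
  by rewrite inE negb_or (edge_neq e1) vNp.
have u2 : upath e v w2 [:: w2] by rewrite /upath /= e2 eqxx /= inE (edge_neq e2).
by case: (upath_uniq u1 u2).
Qed.

Lemma branch_edge_out v w a b :
  e v w -> a \in branch v w -> b \notin branch v w -> e a b -> b = v /\ a = w.
Proof.
move=> evw aC bC eab.
have av : a != v by apply: contraTneq aC => ->; rewrite branch_notin.
case: (eqVneq b v) => [bv | bv].
  by split=> //; apply/esym/(branch_nbr evw); rewrite // e_sym -bv.
move: bC; rewrite !inE in aC *; case/negP; apply: connect_trans aC (connect1 _).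
by rewrite /restr /= eab !inE av bv.
Qed.

Lemma connected_setC_branch v w : e v w -> connectedb e (~: branch v w).
Proof.
move=> evw.
have to_v x : x \notin branch v w -> connect (restr e (~: branch v w)) x v.
  move=> xC; have /connectP[p pp lp] := e_connect x v.
  elim: p x xC pp lp => [|y p IH] x xC /=; first by move=> _ ->; rewrite connect0.
  case/andP => exy pp lp; case: (boolP (y \in branch v w)) => yC.
    by have [-> _] := branch_edge_out evw yC xC (etrans (e_sym y x) exy); rewrite connect0.
  apply: connect_trans (connect1 _) (IH y yC pp lp).
  by rewrite /restr /= exy !in_setC xC.
apply/connectedbP => x y; rewrite !in_setC => xC yC.
by apply: connect_trans (to_v x xC) _; rewrite (sym_connect_sym (restr_sym _)) to_v.
Qed.

Lemma branch_of_connect (H : {set V}) v y : connect (restr e H) v y -> y != v ->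
  exists w, [/\ e v w, w \in H & y \in branch v w].
Proof.
case/connect_upath => -[|w p] [pp lp up] yv; first by rewrite -lp eqxx in yv.
case/andP: pp => /and3P[evw _ wH] pp; case/andP: up => vNp _.
exists w; split => //; rewrite inE -lp; apply/connectP; exists p => //.
have sub : {in ~: [set v] &, subrel (restr e H) (restr e (~: [set v]))}.
  by move=> a b aP bP /and3P[eab _ _]; rewrite /restr /= eab aP bP.
apply: (sub_in_path sub) pp; apply/allP => z zp; suff : z \in [set~ v] by [].
by rewrite !inE; apply: contraNneq vNp => <-.
Qed.

Lemma branch_of_neq v y : y != v -> exists w, e v w /\ y \in branch v w.
Proof.
move=> yv; have : connect (restr e setT) v y.
  by rewrite (eq_connect (e' := e)) // => a b; rewrite /restr /= !inE !andbT.
by case/branch_of_connect => // w [evw _ yC]; exists w.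
Qed.

Lemma branch_sub p v w : e p v -> e v w -> w != p -> branch v w \subset branch p v.
Proof.
move=> epv evw wp; apply/subsetP => y; rewrite !inE => /connectP[q pq ->].
have pNC : p \notin branch v w.
  by apply: contraNN wp => /(branch_nbr evw) -> //; rewrite e_sym.
have sub : {in branch v w &, subrel (restr e (~: [set v])) (restr e (~: [set p]))}.
  move=> a b aC bC /and3P[eab _ _]; rewrite /restr /= eab !inE /=.
  by apply/andP; split; apply: contraNneq pNC => <-.
have allC : all [in branch v w] (w :: q).
  by apply/allP => z zq; rewrite inE; apply: (path_connect pq).
apply/connectP; exists (w :: q) => //=.
rewrite (sub_in_path sub allC pq) andbT /restr /= evw !inE wp andbT.
by rewrite eq_sym (edge_neq epv).
Qed.

Lemma branch_disjoint v w1 w2 : e v w1 -> e v w2 -> w1 != w2 ->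
  [disjoint branch v w1 & branch v w2].
Proof.
move=> e1 e2 w12; apply/pred0P => y /=; apply: contraNF w12 => /andP[y1 y2].
apply/eqP/(branch_nbr e1 e2); move: y1 y2; rewrite !inE => y1 y2.
by apply: connect_trans y1 _; rewrite (sym_connect_sym (restr_sym _)).
Qed.

Section MinSubtree.
Variable X : {set V}.
Let S := min_subtree e X.
Let B := [set v in S | 3 <= deg_in e S v].

Lemma min_subtree_min (H : {set V}) : X \subset H -> connectedb e H -> S \subset H.
Proof. by move=> XH cH; apply/subsetP => s /bigcapP; apply; rewrite XH cH. Qed.

Lemma sub_min_subtree : X \subset S.
Proof. by apply/bigcapsP => H /andP[]. Qed.

Lemma upath_min_subtree s1 s2 p w : upath e s1 s2 p -> s1 \in S -> s2 \in S ->
  w \in s1 :: p -> w \in S.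
Proof.
move=> up s1S s2S wp; apply/bigcapP => H /andP[XH cH].
have /subsetP S_H := min_subtree_min XH cH.
have [q [pq lq uq]] := connect_upath (connectedbP _ cH _ _ (S_H _ s1S) (S_H _ s2S)).
have qp : q = p by apply: upath_uniq (upath_of_restr pq uq) _; rewrite lq.
move: wp; rewrite -qp inE => /predU1P[->|]; first exact: S_H.
exact: (allP (path_restr_all pq)).
Qed.

Lemma min_subtree_branch_root v w x x0 : e v w ->
  x \in X -> x \in branch v w -> x0 \in X -> x0 \notin branch v w -> w \in S.
Proof.
move=> evw xX xC x0X x0C; apply/bigcapP => H /andP[XH cH].
have /connectP[p pp lp] := connectedbP _ cH _ _ (subsetP XH _ xX) (subsetP XH _ x0X).
rewrite lp in x0C; have [a [b [aC bC /and3P[eab aH _]]]] := path_crossing pp xC x0C.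
by have [_ <-] := branch_edge_out evw aC bC eab.
Qed.

Lemma min_subtree_branch_meet v w y : e v w -> y \in S -> y \in branch v w ->
  exists2 x, x \in X & x \in branch v w.
Proof.
move=> evw yS yC; apply/exists_inP; apply: contraLR yC => /exists_inPn X_out.
rewrite -in_setC; apply: subsetP y yS; apply: min_subtree_min (connected_setC_branch evw).
by apply/subsetP => x /X_out; rewrite in_setC.
Qed.

Lemma min_subtree_branch v w x0 y : e v w -> x0 \in X -> x0 \notin branch v w ->
  y \in S -> y \in branch v w -> w \in S.
Proof.
move=> evw x0X x0C yS yC; have [x xX xC] := min_subtree_branch_meet evw yS yC.
exact: min_subtree_branch_root evw xX xC x0X x0C.
Qed.

Lemma min_subtree_child p v x0 : e p v -> v \in S -> v \notin X -> x0 \in X ->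
  x0 \notin branch p v -> exists w, [/\ e v w, w != p & w \in S].
Proof.
move=> epv vS vX x0X x0C; have [x xX xC] := min_subtree_branch_meet epv vS (branch_root p v).
have xv : x != v by apply: contraNneq vX => <-.
move: xC; rewrite inE => /branch_of_connect/(_ xv)[w [evw wp xCw]].
have {}wp : w != p by move: wp; rewrite !inE.
have x0Cw : x0 \notin branch v w.
  by apply: contraNN x0C => /(subsetP (branch_sub epv evw wp)).
by exists w; split => //; apply: min_subtree_branch_root evw xX xCw x0X x0Cw.
Qed.

Lemma card_branching_step v (N Q : {set V}) x0 :
  v \in Q -> x0 \in X ->
  {in N, forall w, e v w} ->
  {in N, forall w, branch v w \subset Q} ->
  {in N, forall w, x0 \notin branch v w} ->
  {in Q, forall y, y != v -> exists2 w, w \in N & y \in branch v w} ->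
  {in N :&: S, forall w, #|B :&: branch v w| < #|X :&: branch v w|} ->
  #|B :&: Q| + #|N :&: S| + (v \in X) <= (v \in B) + #|X :&: Q|.
Proof.
move=> vQ x0X eN subQ x0N cover IH; set NS := N :&: S.
have cardB : #|(B :&: Q) :\ v| <= \sum_(w in NS) #|B :&: branch v w|.
  apply: leq_trans (card_bigcup_le _ _); apply/subset_leq_card/subsetP => y.
  rewrite in_setD1 in_setI => /and3P[yv yB yQ]; have [w wN yC] := cover y yQ yv.
  have yS : y \in S by move: yB; rewrite inE => /andP[].
  have wS := min_subtree_branch (eN w wN) x0X (x0N w wN) yS yC.
  by apply/bigcupP; exists w; rewrite in_setI ?wN ?wS ?yB.
have cardX : \sum_(w in NS) #|X :&: branch v w| <= #|(X :&: Q) :\ v|.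
  rewrite -card_bigcup_disjoint; last first.
    move=> w1 w2 /setIP[w1N _] /setIP[w2N _] w12.
    apply: disjointWl (subsetIr X _) _; rewrite disjoint_sym.
    by apply: disjointWl (subsetIr X _) _; rewrite disjoint_sym branch_disjoint ?eN.
  apply/subset_leq_card/bigcupsP => w /setIP[wN _]; apply/subsetP => y /setIP[yX yC].
  rewrite !inE yX (subsetP (subQ w wN)) // !andbT.
  by apply: contraTneq yC => ->; rewrite branch_notin ?eN.
have cardIH : \sum_(w in NS) #|B :&: branch v w| + #|NS| <=
              \sum_(w in NS) #|X :&: branch v w|.
  by rewrite -sum1_card -big_split; apply: leq_sum => w /IH /=; rewrite addn1.
move: (cardsD1 v (B :&: Q)) (cardsD1 v (X :&: Q)); rewrite !inE vQ !andbT; lia.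
Qed.

Lemma card_branching_branch p v x0 : e p v -> v \in S -> x0 \in X ->
  x0 \notin branch p v -> #|B :&: branch p v| < #|X :&: branch p v|.
Proof.
have [n] := ubnP #|branch p v|; elim: n => // n IHn in p v *.
rewrite ltnS => small epv vS x0X x0C; set N := [set w | e v w & w != p].
have eN : {in N, forall w, e v w} by move=> w; rewrite inE => /andP[].
have subN : {in N, forall w, branch v w \subset branch p v}.
  by move=> w; rewrite inE => /andP[evw wp]; apply: branch_sub.
have x0N : {in N, forall w, x0 \notin branch v w}.
  by move=> w /subN /subsetP sub; apply: contraNN x0C => /sub.
have cover : {in branch p v, forall y, y != v -> exists2 w, w \in N & y \in branch v w}.
  move=> y; rewrite inE => yC yv; have [w [evw wp yCw]] := branch_of_connect yC yv.
  by exists w; rewrite // inE evw; rewrite !inE in wp.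
have IH : {in N :&: S, forall w, #|B :&: branch v w| < #|X :&: branch v w|}.
  move=> w /setIP[wN wS]; apply: IHn (eN w wN) wS x0X (x0N w wN).
  have : branch v w \subset branch p v :\ v.
    apply/subsetP => y yC; rewrite in_setD1 (subsetP (subN w wN)) // andbT.
    by apply: contraTneq yC => ->; rewrite branch_notin ?eN.
  by move/subset_leq_card; have := cardsD1 v (branch p v); rewrite branch_root; lia.
have := card_branching_step (branch_root p v) x0X eN subN x0N cover IH.
suff : (v \in B) + 1 <= #|N :&: S| + (v \in X) by lia.
have degN : deg_in e S v <= (#|N :&: S|).+1.
  apply: (@leq_trans #|p |: (N :&: S)|); last by rewrite cardsU1; case: (_ \notin _).
  apply/subset_leq_card/subsetP => w; rewrite !inE => /andP[wS evw].
  by case: eqP; rewrite //= evw wS.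
case vB : (v \in B); first by move: vB degN; rewrite inE vS /=; lia.
case vX : (v \in X); first by lia.
have [w [evw wp wS]] := min_subtree_child epv vS (negbT vX) x0X x0C.
by rewrite addn0 add0n card_gt0; apply/set0Pn; exists w; rewrite !inE evw wp wS.
Qed.

Lemma card_branching_lt r : r \in X -> #|B| < #|X|.
Proof.
move=> rX; set N := [set w | e r w].
have eN : {in N, forall w, e r w} by move=> w; rewrite inE.
have cover : {in setT, forall y, y != r -> exists2 w, w \in N & y \in branch r w}.
  by move=> y _ /branch_of_neq[w [erw yC]]; exists w; rewrite // inE.
have IH : {in N :&: S, forall w, #|B :&: branch r w| < #|X :&: branch r w|}.
  by move=> w /setIP[/eN erw wS]; apply: card_branching_branch erw wS rX (branch_notin erw).
have := card_branching_step (in_setT r) rX eN (fun w _ => subsetT _)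
  (fun w wN => branch_notin (eN w wN)) cover IH.
rewrite !setIT rX; case rB : (r \in B); last by lia.
have : 3 <= deg_in e S r by move: rB; rewrite inE => /andP[].
have : [set w in S | e r w] \subset N :&: S.
  by apply/subsetP => w; rewrite !inE => /andP[-> ->].
by rewrite /deg_in => /subset_leq_card; lia.
Qed.

Lemma card_Yset_lt r : r \in X -> #|Yset e X| < 2 * #|X|.
Proof.
move=> rX; apply: leq_ltn_trans (leq_card_setU X B).1 _.
by rewrite mul2n -addnn ltn_add2l (card_branching_lt rX).
Qed.

End MinSubtree.

Lemma upath_rev u v p : upath e u v p -> upath e v u (rev (belast u p)).
Proof.
case/and3P => pp /eqP lp up.
have E : v :: rev (belast u p) = rcons (rev p) u by rewrite -rev_rcons -lp -lastI rev_cons.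
apply/and3P; split; last by rewrite E -rev_cons rev_uniq.
  by rewrite -{1}lp rev_path; apply: sub_path pp => a b; rewrite e_sym.
by rewrite -(last_cons u) E last_rcons.
Qed.

Lemma inner_sym u v w : inner e u v w -> inner e v u w.
Proof.
case=> wu [wv [p [up wp]]]; do 2!split=> //; exists (rev (belast u p)); split.
  exact: upath_rev.
case/and3P: up => _ /eqP lp _; rewrite mem_rev.
have : w \in u :: p by rewrite inE wp orbT.
by rewrite lastI lp mem_rcons inE => /predU1P[].
Qed.

Lemma good_pair_sym (Y : {set V}) u v : good_pair e Y u v -> good_pair e Y v u.
Proof.
case=> uY vY [w /inner_sym iw] noY; split=> //; first by exists w.
by move=> w' /inner_sym; apply: noY.
Qed.

Lemma inner_of_upath x v p w : upath e x v p -> w \in p -> w != v -> inner e x v w.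
Proof.
move=> up wp /eqP wv; split; last by split=> //; exists p.
by case/and3P: up => _ _ /andP[xp _] wx; rewrite -wx wp in xp.
Qed.

Lemma mem_upath_inner x v p w : upath e x v p -> inner e x v w -> w \in p.
Proof. by move=> up [_ [_ [q [uq wq]]]]; rewrite -(upath_uniq uq up). Qed.

Lemma upath_prefix x v s1 s2 : upath e x v (s1 ++ s2) -> upath e x (last x s1) s1.
Proof.
case/and3P; rewrite cat_path -cat_cons cat_uniq => /andP[p1 _] _ /and3P[u1 _ _].
by rewrite /upath p1 eqxx u1.
Qed.

Lemma inner_split u v r z : inner e u v z -> z != r -> inner e u r z \/ inner e v r z.
Proof.
move=> iuv zr; have [zu [zv _]] := iuv.
have [pu upu] := upath_exists u r; have [pv upv] := upath_exists v r.
have [zpu|zNpu] := boolP (z \in pu); first by left; apply: inner_of_upath upu zpu zr.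
have [zpv|zNpv] := boolP (z \in pv); first by right; apply: inner_of_upath upv zpv zr.
case/and3P: (upu) => ppu /eqP lpu _; case/and3P: (upath_rev upv) => ppv /eqP lpv _.
have walk : path e u (pu ++ rev (belast v pv)) by rewrite cat_path ppu lpu.
have : last u (pu ++ rev (belast v pv)) = v by rewrite last_cat lpu lpv.
case/shortenP: walk => q pq uq sub_q lq.
have uvq : upath e u v q by rewrite /upath pq lq eqxx uq.
have := sub_q z (mem_upath_inner uvq iuv).
rewrite mem_cat (negbTE zNpu) mem_rev => /mem_belast; rewrite inE (negbTE zNpv) orbF.
by move/eqP.
Qed.

Lemma upath_diverge y v1 v2 c b1 b2 s1 s2 z :
  upath e y v1 (c ++ b1 :: s1) -> upath e y v2 (c ++ b2 :: s2) -> b1 != b2 ->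
  z \in b1 :: s1 -> z \notin b2 :: s2.
Proof.
move=> up1 up2 b12 /mem_split[t1 [t1' E1]]; apply/negP => /mem_split[t2 [t2' E2]].
have to_z t t' v : upath e y v (c ++ t ++ z :: t') -> upath e y z (c ++ rcons t z).
  by rewrite -cat_rcons catA => /upath_prefix; rewrite last_cat last_rcons.
have head_z b s t t' : b :: s = t ++ z :: t' -> b = head z t by case: t => [|? ?] [].
rewrite E1 in up1; rewrite E2 in up2; move/eqP: (upath_uniq (to_z _ _ _ up1) (to_z _ _ _ up2)).
rewrite eqseq_cat // => /andP[_ /eqP/rcons_inj[t12]].
by move: b12; rewrite (head_z _ _ _ _ E1) (head_z _ _ _ _ E2) t12 eqxx.
Qed.

Section GoodPairs.
Variable X : {set V}.
Let S := min_subtree e X.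
Let B := [set v in S | 3 <= deg_in e S v].
Let Y := Yset e X.

Lemma Yset_sub : Y \subset S.
Proof.
apply/subsetP => y /setUP[/(subsetP (sub_min_subtree X)) //|].
by rewrite inE => /andP[].
Qed.

Lemma upath_diverge_branching y v1 v2 c m b1 b2 s1 s2 :
  y \in S -> v1 \in S -> v2 \in S ->
  upath e y v1 (rcons c m ++ b1 :: s1) -> upath e y v2 (rcons c m ++ b2 :: s2) ->
  b1 != b2 -> m \in B.
Proof.
move=> yS v1S v2S up1 up2 b12; set a := last y c.
have in1 w : w \in y :: rcons c m ++ b1 :: s1 -> w \in S := upath_min_subtree up1 yS v1S.
have in2 w : w \in y :: rcons c m ++ b2 :: s2 -> w \in S := upath_min_subtree up2 yS v2S.
have steps b s v : upath e y v (rcons c m ++ b :: s) -> e a m && e m b.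
  by case/and3P; rewrite cat_path rcons_path last_rcons /= => /andP[/andP[_ ->] /andP[-> _]].
have a_notin b s v : upath e y v (rcons c m ++ b :: s) -> a != b.
  case/and3P => _ _; rewrite -cat_cons cat_uniq => /and3P[_ /hasPn a_out _].
  apply: contraTneq (a_out b (mem_head _ _)) => <-.
  by rewrite -rcons_cons mem_rcons inE mem_last orbT.
have /andP[eam emb1] := steps _ _ _ up1; have /andP[_ emb2] := steps _ _ _ up2.
have mS : m \in S by apply: in1; rewrite inE mem_cat mem_rcons mem_head orbT.
rewrite inE mS /deg_in; apply: leq_trans (subset_leq_card (_ : [set a; b1; b2] \subset _)).
  by rewrite -setUA cardsU1 cards2 !inE negb_or b12 (a_notin _ _ _ up1) (a_notin _ _ _ up2).
apply/subsetP => w; rewrite !inE => /orP[/orP[]|] /eqP ->.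
- rewrite e_sym eam andbT; apply: in1.
  by rewrite -cat_cons -rcons_cons mem_cat mem_rcons inE mem_last orbT.
- by rewrite emb1 andbT; apply: in1; rewrite -cat_cons mem_cat !inE eqxx !orbT.
- by rewrite emb2 andbT; apply: in2; rewrite -cat_cons mem_cat !inE eqxx !orbT.
Qed.

Lemma good_pair_first_Y y u z r p :
  good_pair e Y y u -> inner e y u z -> inner e y r z -> r \in Y ->
  upath e y r p -> u = nth y p (find [in Y] p).
Proof.
case=> yY uY _ noY iuz irz rY up; have [q uq] := upath_exists y u.
have prefix_notY c b s w : q = c ++ b :: s -> w \in c -> w \notin Y.
  move=> Eq wc; apply: noY; apply: (inner_of_upath uq); first by rewrite Eq mem_cat wc.
  case/and3P: (uq) => _ /eqP <-; rewrite Eq last_cat -cat_cons cat_uniq.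
  case/and3P=> _ /hasPn out _; apply: contraNneq (out _ (mem_last b s)) => /= <-.
  by rewrite inE wc orbT.
have [yS uS rS] : [/\ y \in S, u \in S & r \in S] by rewrite !(subsetP Yset_sub).
have [c [q' [p' [Eq Ep div]]]] := common_prefix q p.
case: q' Eq div => [|b s] Eq div.
  (* the y–u path is an initial segment of the y–r path *)
  case/lastP: c Eq Ep => [|c1 u'] Eq Ep; rewrite cats0 in Eq; subst q.
    by case/and3P: uq => _ /eqP /= uy _; move: iuz; rewrite -uy => /inner_irr.
  have u'u : u' = u by case/and3P: uq => _ /eqP; rewrite last_rcons.
  subst u'; rewrite Ep nth_rcons_cat_find //; apply/hasPn => w wc1.
  by apply: (prefix_notY c1 u [::]); rewrite ?cats1.
case: p' Ep div => [|b' s'] Ep div.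
  (* r would be an inner vertex of the y–u path *)
  rewrite cats0 in Ep; subst p; have rc : r \in c.
    have yr : y != r by apply/eqP => yr; move: irz; rewrite -yr => /inner_irr.
    by case/and3P: up => _ /eqP lr _; have := mem_last y c; rewrite lr inE eq_sym (negbTE yr).
  by move: rY; rewrite (negbTE (prefix_notY _ _ _ _ Eq rc)).
(* the paths part after z, at a vertex of degree 3 in T<X> inside the y–u path *)
have b12 := div _ _ _ _ erefl erefl; rewrite Eq in uq; rewrite Ep in up.
have zc : z \in c.
  have := mem_upath_inner uq iuz; have := mem_upath_inner up irz.
  rewrite !mem_cat => /orP[//|zp] /orP[//|zq].
  by move: (upath_diverge uq up b12 zq); rewrite zp.
case/lastP: c zc Eq Ep uq up => // c' m _ Eq _ uq up.
have /(subsetP (subsetUr X B)) mY := upath_diverge_branching yS uS rS uq up b12.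
have mc : m \in rcons c' m by rewrite mem_rcons mem_head.
by move: mY; rewrite (negbTE (prefix_notY _ _ _ _ Eq mc)).
Qed.

Section Injection.
Variables (Z : {set V}) (g : V -> V -> V) (r : V).
Hypothesis rX : r \in X.
Hypothesis g_sym : forall u v, good_pair e Y u v -> g u v = g v u.
Hypothesis g_inner : forall u v, good_pair e Y u v -> inner e u v (g u v).
Hypothesis Z_sub : forall z, z \in Z -> z \in Y \/ exists u v, good_pair e Y u v /\ z = g u v.

Lemma card_setD_Yset : #|Z :\: Y| <= #|Y :\ r|.
Proof.
have rY : r \in Y by rewrite in_setU rX.
pose next_Y y := let p := xchoose (upath_exists y r) in nth y p (find [in Y] p).
apply: leq_trans (leq_imset_card (fun y => g y (next_Y y)) _).
apply/subset_leq_card/subsetP => z /setDP[/Z_sub[-> //|[u [v [uv ->]]]] gNY].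
have image_of w1 w2 : good_pair e Y w1 w2 -> inner e w1 r (g w1 w2) ->
    g w1 w2 \in [set g y (next_Y y) | y in Y :\ r].
  move=> w12 i1; have [w1Y _ _ _] := w12; apply/imsetP; exists w1.
    by rewrite in_setD1 w1Y andbT; apply: contraPneq i1 => ->; apply: inner_irr.
  congr g; exact: good_pair_first_Y w12 (g_inner w12) i1 rY (xchooseP (upath_exists w1 r)).
have gr : g u v != r by apply: contraNneq gNY => ->.
have [|iv] := inner_split (g_inner uv) gr; first exact: image_of.
by rewrite g_sym //; apply: image_of (good_pair_sym uv) _; rewrite -g_sym.
Qed.

Lemma card_lt_double_Yset : #|Z| < 2 * #|Y|.
Proof.
have rY : r \in Y by rewrite in_setU rX.
have := subset_leq_card (subsetIr Z Y); have := cardsD1 r Y; rewrite rY.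
by have := cardsID Y Z; have := card_setD_Yset; lia.
Qed.

End Injection.

End GoodPairs.

End Tree.

Lemma Yset0 (V : finType) (e : rel V) : Yset e set0 = set0.
Proof.
have S0 : min_subtree e set0 = set0.
  apply/eqP; rewrite -subset0; apply: bigcap_inf; rewrite sub0set.
  by apply/forall_inP => x; rewrite inE.
by apply/setP => v; rewrite /Yset S0 !inE.
Qed.

Local Open Scope ring_scope.

Theorem lemma11 (R : realFieldType) (V : finType) (e : rel V) (c : V -> R)
    (a : R) (k : nat) (X Z : {set V}) (g : V -> V -> V) :
  is_tree e ->
  (forall v, 0 < c v) ->
  0 <= a ->
  (exists v, c v <= a) ->
  (* k = k(T, c) = max_{t >= 0} k(T, c, t) *)
  (exists t, 0 <= t /\ kt e c t = k) ->
  (forall t, 0 <= t -> (kt e c t <= k)%N) ->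
  (* X contains exactly one (arbitrary) vertex of each heavy module w.r.t. a *)
  (forall x, x \in X -> exists H, H \in heavy_modules e c a /\ x \in H) ->
  (forall H, H \in heavy_modules e c a -> #|X :&: H| = 1%N) ->
  (* g picks one minimum-cost inner vertex for each (unordered) good pair *)
  (forall u v, good_pair e (Yset e X) u v -> g u v = g v u) ->
  (forall u v, good_pair e (Yset e X) u v ->
     inner e u v (g u v) /\ (forall w, inner e u v w -> c (g u v) <= c w)) ->
  (* Z = V(T_Z) *)
  (forall z, z \in Z <->
     z \in Yset e X \/ exists u v, good_pair e (Yset e X) u v /\ z = g u v) ->
  (#|Z| <= 4 * k - 3)%N.
Proof.
(* The costs only enter through the choice of X and g: the bound is purely combinatorial. *)
move=> [e_sym e_irr e_conn e_uniq] _ a_ge0 _ _ k_max X_mod X_meet g_sym g_spec Z_def.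
have X_le_k : (#|X| <= k)%N.
  apply: leq_trans (k_max a a_ge0); apply: leq_card_transversal X_mod _.
  by move=> H /X_meet ->.
have [X0|[r rX]] := set_0Vmem X.
  suff -> : Z = set0 by rewrite cards0.
  apply/eqP; rewrite -subset0; apply/subsetP => z /Z_def.
  by rewrite X0 Yset0 inE => -[//|[u [v [[]]]]]; rewrite inE.
have Y_lt := card_Yset_lt e_sym e_irr e_conn e_uniq rX.
have Z_lt := card_lt_double_Yset e_sym e_conn e_uniq rX g_sym
  (fun u v uv => (g_spec u v uv).1) (fun z zZ => proj1 (Z_def z) zZ).
lia.
Qed.
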